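(* Let $F$ and $V$ be finite-dimensional real vector spaces in duality via a nondegenerate pairing $\langle\cdot,\cdot\rangle$, with $V$ carrying its usual topology, and let $Q$ be a positive semi-definite quadratic form on $F$. Let $\mathcal U_0$ be the family of all open subsets of half-spaces $\{\nu\in V:\langle f,\nu\rangle>a\}$ with $a>0$ and $Q(f)=0$. Let $\mathcal U_1$ be the family of all sets $$\{\nu\in V:\langle f_0,\nu\rangle>a_0,\ \langle f_1,\nu\rangle<a_1,\ \dots,\ \langle f_n,\nu\rangle<a_n\}$$ with $n\ge0$, $f_0,\dots,f_n\in F$, $a_0,\dots,a_n\in\mathbb R$, such that either $0<a_0/\sqrt{Q(f_0)}<a_i/\sqrt{Q(f_i)}$ for all $i=1,\dots,n$, or $a_0<0<a_i$ for all $i=1,\dots,n$. Then $\mathcal U_0\cup\mathcal U_1$ is a basis of the topology of $V$.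
   Context: Division convention: $0/0=0$, $a/0=+\infty$ for $a>0$ and $a/0=-\infty$ for $a<0$. *)

From Stdlib Require Import Reals List.
From mathcomp Require Import all_boot.
Set Implicit Arguments.
Open Scope R_scope.

(* Finite-dimensional real vector spaces modelled in coordinates:
   F = R^m, V = R^n (vectors are functions 'I_k -> R). *)
Definition vec (k : nat) := 'I_k -> R.

Definition pairing (m n : nat) (M : 'I_m -> 'I_n -> R) (f : vec m) (v : vec n) : R :=
  \big[Rplus/0]_(i < m) \big[Rplus/0]_(j < n) (M i j * f i * v j).

Definition nondegenerate (m n : nat) (M : 'I_m -> 'I_n -> R) : Prop :=
  (forall f : vec m, (forall v : vec n, pairing M f v = 0) -> forall i, f i = 0) /\
  (forall v : vec n, (forall f : vec m, pairing M f v = 0) -> forall j, v j = 0).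

Definition qform (m : nat) (S : 'I_m -> 'I_m -> R) (f : vec m) : R :=
  \big[Rplus/0]_(i < m) \big[Rplus/0]_(j < m) (S i j * f i * f j).

Definition psd (m : nat) (S : 'I_m -> 'I_m -> R) : Prop :=
  forall f : vec m, 0 <= qform S f.

Definition is_open (n : nat) (W : vec n -> Prop) : Prop :=
  forall x, W x -> exists eps, 0 < eps /\
    forall y : vec n, (forall j, Rabs (y j - x j) < eps) -> W y.

(* Extended reals for the division convention a/0 = +oo (a>0), -oo (a<0), 0/0 = 0. *)
Inductive ereal := EFin (r : R) | EPInf | EMInf.

Definition elt (x y : ereal) : Prop :=
  match x, y with
  | EFin a, EFin b => a < b
  | EMInf, EFin _ => True
  | EMInf, EPInf => True
  | EFin _, EPInf => True
  | _, _ => False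
  end.

Definition ediv (a b : R) : ereal :=
  match Req_EM_T b 0 with
  | left _ =>
      match Rlt_dec 0 a with
      | left _ => EPInf
      | right _ => match Rlt_dec a 0 with left _ => EMInf | right _ => EFin 0 end
      end
  | right _ => EFin (a / b)
  end.

Definition inU0 (m n : nat) (M : 'I_m -> 'I_n -> R) (S : 'I_m -> 'I_m -> R)
  (U : vec n -> Prop) : Prop :=
  is_open U /\ exists (f : vec m) (a : R), 0 < a /\ qform S f = 0 /\
    forall nu, U nu -> pairing M f nu > a.

(* The family U_1: f_0, a_0 and the list [(f_1,a_1); ...; (f_n,a_n)] (possibly empty). *)
Definition inU1 (m n : nat) (M : 'I_m -> 'I_n -> R) (S : 'I_m -> 'I_m -> R)
  (U : vec n -> Prop) : Prop :=
  exists (f0 : vec m) (a0 : R) (l : list (vec m * R)),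
    (forall nu, U nu <->
       (pairing M f0 nu > a0 /\ Forall (fun p => pairing M (fst p) nu < snd p) l)) /\
    ((elt (EFin 0) (ediv a0 (sqrt (qform S f0))) /\
      Forall (fun p => elt (ediv a0 (sqrt (qform S f0)))
                           (ediv (snd p) (sqrt (qform S (fst p))))) l)
     \/
     (a0 < 0 /\ Forall (fun p => 0 < snd p) l)).

Definition is_basis (n : nat) (B : (vec n -> Prop) -> Prop) : Prop :=
  (forall U, B U -> is_open U) /\
  (forall W, is_open W -> forall x, W x ->
     exists U, B U /\ U x /\ forall y, U y -> W y).

From Stdlib Require Import Reals List Lra Classical.
From mathcomp Require Import all_boot ssralg ssrnum matrix mxalgebra.
From mathcomp Require Import Rstruct.
Set Implicit Arguments.
Open Scope R_scope.

(* Half-spaces, hence U_1-sets, are open because linear functionals are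
   continuous.  Conversely let x lie in an open set W.  If x = 0, the cell
   <0, .> > -1, |<e_j^*, .>| < e cut out by the coordinate functionals e_j^* is a
   U_1-set of the second kind.  Otherwise the functional <., x> on F either does
   not vanish on the radical of Q, and a radical vector f with <f, x> = 1 (so
   Q f = 0) gives the U_0-set {<f, .> > 1/2} /\ W; or it is the polar form
   B(., z) of some z.  Positivity forces Q z > 0 (else B(z, .) = 0 and x = 0), so
   f_0 = z / B(z, x) has Q f_0 > 0, <f_0, x> = 1, and is B-orthogonal to the
   hyperplane <., x> = 0.  The vectors g_j = e_j^* - x_j f_0 lie in that
   hyperplane, so Q(f_0 +- K g_j) = Q f_0 + K^2 Q g_j <= (1 + eps) Q f_0 for small
   K, and the cell 1 - eps < <f_0, .>, <f_0 +- K g_j, .> < 1 + eps satisfies the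
   ratio condition and lies in any prescribed box around x. *)

Lemma In_enum {T : finType} (x : T) : In x (enum {: T}).
Proof.
have : x \in enum {: T} by rewrite mem_enum.
elim: (enum {: T}) => //= y s IH; rewrite inE => /orP[/eqP ->|/IH]; by [left | right].
Qed.

Lemma Rabs_sum_le k (F : 'I_k -> R) :
  Rabs (\big[Rplus/0]_(i < k) F i) <= \big[Rplus/0]_(i < k) Rabs (F i).
Proof. apply/RleP; exact: (Num.Theory.ler_norm_sum _ F xpredT). Qed.

Lemma sum_le k (F G : 'I_k -> R) :
  (forall i, F i <= G i) -> \big[Rplus/0]_(i < k) F i <= \big[Rplus/0]_(i < k) G i.
Proof. by move=> FG; apply/RleP; apply: Num.Theory.ler_sum => i _; apply/RleP. Qed.

Lemma sum_ge0 k (F : 'I_k -> R) : (forall i, 0 <= F i) -> 0 <= \big[Rplus/0]_(i < k) F i.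
Proof. by move=> F0; apply/RleP; apply: Num.Theory.sumr_ge0 => i _; apply/RleP. Qed.

Lemma le_sum_term k (F : 'I_k -> R) j :
  (forall i, 0 <= F i) -> F j <= \big[Rplus/0]_(i < k) F i.
Proof.
move=> F0; rewrite (bigD1 j) //=.
rewrite -{1}(Rplus_0_r (F j)); apply: Rplus_le_compat_l.
by apply/RleP; apply: Num.Theory.sumr_ge0 => i _; apply/RleP.
Qed.

Definition vadd_scale (p : nat) (f : vec p) (c : R) (g : vec p) : vec p :=
  fun i => f i + c * g i.

Definition vscale (p : nat) (c : R) (f : vec p) : vec p := fun i => c * f i.

Definition box (q : nat) (x : vec q) (e : R) (y : vec q) : Prop :=
  forall j, Rabs (y j - x j) < e.

Section Pairing.
Variables (p q : nat) (A : 'I_p -> 'I_q -> R).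

Lemma pairing_vadd_scalel f c g h :
  pairing A (vadd_scale f c g) h = pairing A f h + c * pairing A g h.
Proof.
rewrite /pairing big_distrr -big_split; apply: eq_bigr => i _.
rewrite big_distrr -big_split; apply: eq_bigr => j _ /=; rewrite /vadd_scale; ring.
Qed.

Lemma pairing_vadd_scaler f c g h :
  pairing A h (vadd_scale f c g) = pairing A h f + c * pairing A h g.
Proof.
rewrite /pairing big_distrr -big_split; apply: eq_bigr => i _.
rewrite big_distrr -big_split; apply: eq_bigr => j _ /=; rewrite /vadd_scale; ring.
Qed.

Lemma pairing_vscalel c f h : pairing A (vscale c f) h = c * pairing A f h.
Proof.
rewrite /pairing big_distrr; apply: eq_bigr => i _.
rewrite big_distrr; apply: eq_bigr => j _ /=; rewrite /vscale; ring.
Qed.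

Lemma pairing_vscaler c f h : pairing A h (vscale c f) = c * pairing A h f.
Proof.
rewrite /pairing big_distrr; apply: eq_bigr => i _.
rewrite big_distrr; apply: eq_bigr => j _ /=; rewrite /vscale; ring.
Qed.

Lemma pairing0l h : pairing A (fun _ => 0) h = 0.
Proof. by rewrite /pairing big1 // => i _; rewrite big1 // => j _; ring. Qed.

Lemma pairing_mx f g :
  pairing A f g = (\row_i f i *m \matrix_(i, j) A i j *m (\row_j g j)^T)%R ord0 ord0.
Proof.
rewrite mxE /pairing exchange_big; apply: eq_bigr => j _.
rewrite !mxE big_distrl; apply: eq_bigr => i _; rewrite !mxE.
by rewrite (Rmult_comm (A i j)).
Qed.

Lemma Rabs_pairing_le f d eta : (forall j, Rabs (d j) <= eta) ->
  Rabs (pairing A f d) <=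
  (\big[Rplus/0]_(i < p) \big[Rplus/0]_(j < q) Rabs (A i j * f i)) * eta.
Proof.
move=> d_le; rewrite big_distrl; apply: Rle_trans (Rabs_sum_le _) _.
apply: sum_le => i; rewrite big_distrl; apply: Rle_trans (Rabs_sum_le _) _.
apply: sum_le => j; rewrite Rabs_mult.
by apply: Rmult_le_compat_l (d_le j); apply: Rabs_pos.
Qed.

Lemma pairing_near f x r : 0 < r -> exists eta, 0 < eta /\
  forall y, box x eta y -> Rabs (pairing A f y - pairing A f x) < r.
Proof.
move=> r0; set L := \big[Rplus/0]_(i < p) \big[Rplus/0]_(j < q) Rabs (A i j * f i).
have L0 : 0 <= L by apply: sum_ge0 => i; apply: sum_ge0 => j; apply: Rabs_pos.
exists (r / (L + 1)); split; first by apply: Rdiv_lt_0_compat; lra.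
move=> y xy; have := @Rabs_pairing_le f (vadd_scale y (-1) x) (r / (L + 1)).
rewrite pairing_vadd_scaler.
have -> : pairing A f y + -1 * pairing A f x = pairing A f y - pairing A f x by ring.
have Lr : L * (r / (L + 1)) < r.
  rewrite /Rdiv -Rmult_assoc; apply: (Rmult_lt_reg_r (L + 1)); first lra.
  rewrite Rmult_assoc Rinv_l; lra.
move=> H; apply: Rle_lt_trans Lr; apply: H => j.
have -> : vadd_scale y (-1) x j = y j - x j by rewrite /vadd_scale; ring.
exact: Rlt_le (xy j).
Qed.

Lemma open_pairing_gt f a : is_open (fun y => pairing A f y > a).
Proof.
move=> x xa; have [eta [eta0 near]] := @pairing_near f x _ (proj2 (Rlt_0_minus _ _) xa).
by exists eta; split => // y /near /Rabs_def2; lra.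
Qed.

Lemma open_pairing_lt f a : is_open (fun y => pairing A f y < a).
Proof.
move=> x xa; have [eta [eta0 near]] := @pairing_near f x _ (proj2 (Rlt_0_minus _ _) xa).
by exists eta; split => // y /near /Rabs_def2; lra.
Qed.

End Pairing.

Lemma open_ext (q : nat) (U V : vec q -> Prop) :
  (forall y, U y <-> V y) -> is_open U -> is_open V.
Proof.
move=> UV oU x /UV /oU [eps [eps0 sub]].
by exists eps; split => // y /sub /UV.
Qed.

Lemma open_and (q : nat) (U V : vec q -> Prop) :
  is_open U -> is_open V -> is_open (fun y => U y /\ V y).
Proof.
move=> oU oV x [/oU [e1 [e1_0 sub1]] /oV [e2 [e2_0 sub2]]].
exists (Rmin e1 e2); split; first exact: Rmin_pos.
move=> y xy; split; [apply: sub1 | apply: sub2] => j; have := xy j;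
  have := Rmin_l e1 e2; have := Rmin_r e1 e2; lra.
Qed.

Definition halfspaces (p q : nat) (A : 'I_p -> 'I_q -> R) (f0 : vec p) (a0 : R)
    (l : list (vec p * R)) (nu : vec q) : Prop :=
  pairing A f0 nu > a0 /\ Forall (fun c => pairing A (fst c) nu < snd c) l.

Lemma open_halfspaces (p q : nat) (A : 'I_p -> 'I_q -> R) f0 a0 l :
  is_open (halfspaces A f0 a0 l).
Proof.
rewrite /halfspaces; apply: open_and; first exact: open_pairing_gt.
elim: l => [|c l IH].
  by move=> x _; exists 1; split; [lra | constructor].
apply: (@open_ext _ (fun y => pairing A (fst c) y < snd c /\
  Forall (fun c => pairing A (fst c) y < snd c) l)).
  by move=> y; rewrite Forall_cons_iff.
apply: open_and; [exact: open_pairing_lt | exact: IH].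
Qed.

Definition sym_list (p k : nat) (f : vec p) (g : 'I_k -> vec p) (a : R) :
    list (vec p * R) :=
  List.map (fun js : 'I_k * bool => (vadd_scale f (if js.2 then 1 else -1) (g js.1), a))
    (enum {: 'I_k * bool}).

Lemma Forall_sym_list (p k : nat) (P : vec p * R -> Prop) f (g : 'I_k -> vec p) a :
  Forall P (sym_list f g a) <->
  forall j (s : bool), P (vadd_scale f (if s then 1 else -1) (g j), a).
Proof.
rewrite /sym_list Forall_map Forall_forall.
by split => [PE j s | PE [j s] _]; [exact: PE (j, s) (In_enum _) | exact: PE j s].
Qed.

Lemma Forall_sym_list_lt (p q k : nat) (A : 'I_p -> 'I_q -> R) f (g : 'I_k -> vec p) a nu :
  Forall (fun c => pairing A (fst c) nu < snd c) (sym_list f g a) <->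
  forall j, pairing A f nu + Rabs (pairing A (g j) nu) < a.
Proof.
rewrite Forall_sym_list /=; split => [lt_a j | lt_a j s].
  have := lt_a j true; have := lt_a j false; rewrite !pairing_vadd_scalel.
  by rewrite /Rabs; case: Rcase_abs; lra.
rewrite pairing_vadd_scalel; have := lt_a j.
by rewrite /Rabs; case: Rcase_abs; case: s; lra.
Qed.

Lemma submx_or_coker {F : fieldType} (k l : nat) (B : 'M[F]_(k, l)) (w : 'rV[F]_l) :
  (w <= B)%MS \/ exists2 v : 'cV[F]_l, (B *m v = 0)%R & (w *m v != 0)%R.
Proof.
case: (boolP (w <= B)%MS) => [|wB]; [by left | right].
have /rV0Pn [j wj] : (w *m cokermx B != 0)%R by rewrite -submxE.
exists (col j (cokermx B)); first by rewrite colE mulmxA mulmx_coker mul0mx.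
apply: contraNneq wj; rewrite colE mulmxA -colE => /matrixP /(_ ord0 ord0).
by rewrite !mxE => ->.
Qed.

Lemma coord_functionals (m n : nat) (M : 'I_m -> 'I_n -> R) :
  (forall v : vec n, (forall f, pairing M f v = 0) -> forall j, v j = 0) ->
  exists G : 'I_n -> vec m, forall j nu, pairing M (G j) nu = nu j.
Proof.
move=> M_inj; set Mx := (\matrix_(i, j) M i j)%R.
have /row_freeP [B MB] : row_free Mx^T.
  apply: inj_row_free => u uM; apply/rowP => j; rewrite mxE.
  apply: (M_inj (fun j => u ord0 j)) => f; rewrite pairing_mx -/Mx.
  have -> : (\row_j u ord0 j)%R = u by apply/rowP => i; rewrite mxE.
  by rewrite -mulmxA -[(Mx *m u^T)%R]trmxK trmx_mul trmxK uM trmx0 mulmx0 mxE.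
exists (fun j i => B i j) => j nu; rewrite pairing_mx -/Mx.
have -> : (\row_i B i j = (col j B)^T)%R by apply/rowP => i; rewrite !mxE.
rewrite -[Mx]trmxK -trmx_mul colE mulmxA MB mul1mx trmx_delta -rowE.
by rewrite !mxE.
Qed.

Lemma ge0_quadratic_linear_eq0 a b :
  0 <= a -> (forall c, 0 <= c * b + c * c * a) -> b = 0.
Proof.
move=> a0 ge0; have := ge0 (- b / (a + 1)).
have -> : - b / (a + 1) * b + - b / (a + 1) * (- b / (a + 1)) * a =
          - ((b / (a + 1)) * (b / (a + 1))) by field; lra.
move=> sq_le0; have t0 : b / (a + 1) = 0 by nra.
have -> : b = b / (a + 1) * (a + 1) by field; lra.
by rewrite t0 Rmult_0_l.
Qed.

Section QuadraticForm.
Variables (p : nat) (S : 'I_p -> 'I_p -> R).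

Definition polar (f g : vec p) : R := pairing S f g + pairing S g f.

Lemma qformE f : qform S f = pairing S f f. Proof. by []. Qed.

Lemma polarC f g : polar f g = polar g f. Proof. by rewrite /polar; ring. Qed.

Lemma polar_diag f : polar f f = 2 * qform S f. Proof. by rewrite /polar qformE; ring. Qed.

Lemma polar_vscalel c f g : polar (vscale c f) g = c * polar f g.
Proof. by rewrite /polar pairing_vscalel pairing_vscaler; ring. Qed.

Lemma qform_vscale c f : qform S (vscale c f) = c * c * qform S f.
Proof. by rewrite !qformE pairing_vscalel pairing_vscaler; ring. Qed.

Lemma qform_vadd_scale f c g :
  qform S (vadd_scale f c g) = qform S f + c * polar f g + c * c * qform S g.
Proof. by rewrite !qformE /polar pairing_vadd_scalel !pairing_vadd_scaler; ring. Qed.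

Lemma polar_pairing f g : polar f g = pairing (fun i j => S i j + S j i) f g.
Proof.
rewrite /polar /pairing [in X in _ + X]exchange_big -big_split; apply: eq_bigr => i _.
by rewrite -big_split; apply: eq_bigr => j _ /=; ring.
Qed.

Lemma psd_polar_eq0 : psd S -> forall z, qform S z = 0 -> forall h, polar z h = 0.
Proof.
move=> S_psd z qz h; apply: (@ge0_quadratic_linear_eq0 (qform S h)) => [|c].
  exact: S_psd.
by have := S_psd (vadd_scale z c h); rewrite qform_vadd_scale qz; lra.
Qed.

Lemma polar_repr_or_radical (q : nat) (A : 'I_p -> 'I_q -> R) (x : vec q) :
  (exists z, forall g, polar g z = pairing A g x) \/
  (exists v, (forall g, polar g v = 0) /\ pairing A v x <> 0).
Proof.
set B := (\matrix_(i, j) (S i j + S j i))%R : 'M[R]_p.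
have BT : (B^T = B)%R by apply/matrixP => i j; rewrite !mxE; exact: Rplus_comm.
set w := ((\matrix_(i, j) A i j *m (\row_j x j)^T)^T)%R.
have wE g : pairing A g x = (\row_i g i *m w^T)%R ord0 ord0.
  by rewrite trmxK mulmxA pairing_mx.
case: (submx_or_coker B w) => [/submxP [z wz] | [v Bv wv]]; [left | right].
  exists (fun i => z ord0 i) => g; rewrite polar_pairing pairing_mx wE wz.
  have -> : (\row_i z ord0 i)%R = z by apply/rowP => i; rewrite mxE.
  by rewrite trmx_mul BT mulmxA.
exists (fun i => v i ord0); split.
  move=> g; rewrite polar_pairing pairing_mx.
  have -> : ((\row_i v i ord0)^T)%R = v by apply/colP => i; rewrite !mxE.
  by rewrite -mulmxA Bv mulmx0 mxE.
rewrite wE; have -> : (\row_i v i ord0)%R = (v^T)%R by apply/rowP => i; rewrite !mxE.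
rewrite -trmx_mul mxE; apply: contraNnot wv => wv0.
by apply/eqP/matrixP => i j; rewrite !ord1 wv0 mxE.
Qed.

End QuadraticForm.

(* [ediv] is defined with Stdlib's [Req_EM_T], which Rstruct shadows. *)
Lemma ediv_sqrt a q : 0 < q -> ediv a (sqrt q) = EFin (a / sqrt q).
Proof.
move=> q0; rewrite /ediv; case: RIneq.Req_EM_T => // sq0.
by have := sqrt_lt_R0 _ q0; lra.
Qed.

Lemma div_sqrt_lt a b q r : 0 <= a -> 0 <= b -> 0 < q -> 0 < r ->
  a * a * r < b * b * q -> a / sqrt q < b / sqrt r.
Proof.
move=> a0 b0 q0 r0 ab; have sq := sqrt_lt_R0 _ q0; have sr := sqrt_lt_R0 _ r0.
have div_ge0 c t : 0 <= c -> 0 < t -> 0 <= c / t.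
  by move=> c0 t0; apply/Rmult_le_pos/Rlt_le/Rinv_0_lt_compat.
apply: Rsqr_incrst_0 (div_ge0 _ _ a0 sq) (div_ge0 _ _ b0 sr).
rewrite !Rsqr_div' !Rsqr_sqrt; try lra.
apply: (Rmult_lt_reg_r (q * r)); first nra.
rewrite /Rsqr; have -> : a * a / q * (q * r) = a * a * r by field; lra.
by have -> : b * b / r * (q * r) = b * b * q by field; lra.
Qed.

(* In [U1_nbhs], [K * K * T <= eps * q0] gives the ratio condition of the cell
   and the last inequality keeps the cell inside the [e]-box. *)
Lemma perturbation_parameters q0 T X e : 0 < q0 -> 0 <= T -> 0 <= X -> 0 < e ->
  exists eps K, 0 < eps < 1 /\ 0 < K /\ K * K * T <= eps * q0 /\
    2 * eps / K + X * eps <= e.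
Proof.
move=> q0_gt0 T_ge0 X_ge0 e_gt0; set c := sqrt (q0 / (1 + T)).
have qT_gt0 : 0 < q0 / (1 + T) by apply: Rdiv_lt_0_compat; lra.
have c_gt0 : 0 < c by apply: sqrt_lt_R0.
have cc : c * c = q0 / (1 + T) by apply/sqrt_sqrt/Rlt_le.
have c2_gt0 : 0 < 2 / c by apply: Rdiv_lt_0_compat; lra.
set d := e / (2 / c + X + e + 1).
have dD : d * (2 / c + X + e + 1) = e.
  by rewrite /d /Rdiv Rmult_assoc Rinv_l; lra.
have d_gt0 : 0 < d by apply: Rdiv_lt_0_compat; lra.
have d_lt1 : d < 1.
  by apply: (Rmult_lt_reg_r (2 / c + X + e + 1)); [lra | rewrite dD; lra].
exists (d * d), (d * c); split; [nra | split; [nra | split]].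
  have -> : d * c * (d * c) * T = d * d * (c * c * T) by ring.
  apply: Rmult_le_compat_l; first nra.
  rewrite cc; have -> : q0 / (1 + T) * T = q0 - q0 / (1 + T) by field; lra.
  lra.
have -> : 2 * (d * d) / (d * c) = d * (2 / c) by field; lra.
nra.
Qed.

Section BasicNeighbourhoods.
Variables (m n : nat) (M : 'I_m -> 'I_n -> R) (S : 'I_m -> 'I_m -> R).
Hypothesis S_psd : psd S.
Variable G : 'I_n -> vec m.
Hypothesis G_coord : forall j nu, pairing M (G j) nu = nu j.

Lemma U0_nbhs (v : vec m) (x : vec n) (W : vec n -> Prop) :
  (forall g, polar S g v = 0) -> pairing M v x <> 0 -> is_open W -> W x ->
  exists U, inU0 M S U /\ U x /\ forall y, U y -> W y.
Proof.
move=> v_rad vx oW Wx; set f := vscale (/ pairing M v x) v.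
have fx : pairing M f x = 1 by rewrite pairing_vscalel; field.
have qf : qform S f = 0.
  by have := v_rad v; rewrite polar_diag qform_vscale => qv; nra.
exists (fun y => pairing M f y > 1 / 2 /\ W y); split; [|split].
- split; first by apply: open_and => //; exact: open_pairing_gt.
  by exists f, (1 / 2); split; [lra | split => // y []].
- by rewrite fx; split => //; lra.
- by move=> y [].
Qed.

Lemma U1_nbhs_origin (x : vec n) e : (forall j, x j = 0) -> 0 < e ->
  exists U, inU1 M S U /\ U x /\ forall y, U y -> box x e y.
Proof.
move=> x0 e0; set l := sym_list (fun _ => 0) G e.
exists (halfspaces M (fun _ => 0) (-1) l); split; [|split].
- exists (fun _ => 0), (-1), l; split; first by move=> nu; split.
  by right; split; [lra | apply/Forall_sym_list].
- split; first by rewrite pairing0l; lra.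
  by apply/Forall_sym_list_lt => j; rewrite pairing0l G_coord x0 Rabs_R0; lra.
- move=> y [_ /Forall_sym_list_lt y_lt] j; have := y_lt j.
  by rewrite pairing0l G_coord x0 Rminus_0_r; lra.
Qed.

Lemma sym_list_admissible (f0 : vec m) k (h : 'I_k -> vec m) eps :
  0 < qform S f0 -> 0 < eps < 1 -> (forall j, polar S f0 (h j) = 0) ->
  (forall j, qform S (h j) <= eps * qform S f0) ->
  elt (EFin 0) (ediv (1 - eps) (sqrt (qform S f0))) /\
  Forall (fun c => elt (ediv (1 - eps) (sqrt (qform S f0)))
                       (ediv (snd c) (sqrt (qform S (fst c)))))
    (sym_list f0 h (1 + eps)).
Proof.
move=> q0_gt0 eps01 h_orth qh_le; rewrite ediv_sqrt //=; split.
  by apply: Rdiv_lt_0_compat; [lra | apply: sqrt_lt_R0].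
apply/Forall_sym_list => j s /=; have qh_ge0 := S_psd (h j).
have -> : qform S (vadd_scale f0 (if s then 1 else -1) (h j)) =
          qform S f0 + qform S (h j).
  by rewrite qform_vadd_scale h_orth; case: s; ring.
rewrite ediv_sqrt /=; last lra.
apply: div_sqrt_lt; try lra.
have : (1 - eps) * (1 - eps) * (qform S f0 + qform S (h j)) <=
       (1 - eps) * (1 - eps) * ((1 + eps) * qform S f0).
  by apply: Rmult_le_compat_l; [nra | have := qh_le j; lra].
have : 0 < (1 + eps) * qform S f0 * (eps * (3 - eps)).
  by apply: Rmult_lt_0_compat; apply: Rmult_lt_0_compat; lra.
lra.
Qed.

Lemma U1_nbhs (f0 : vec m) (x : vec n) e :
  0 < qform S f0 -> pairing M f0 x = 1 ->
  (forall g, pairing M g x = 0 -> polar S f0 g = 0) -> 0 < e ->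
  exists U, inU1 M S U /\ U x /\ forall y, U y -> box x e y.
Proof.
move=> q0_gt0 f0x f0_orth e0.
pose g j := vadd_scale (G j) (- x j) f0.
have gx j : pairing M (g j) x = 0 by rewrite pairing_vadd_scalel G_coord f0x; ring.
set T := \big[Rplus/0]_(j < n) qform S (g j).
set X := \big[Rplus/0]_(j < n) Rabs (x j).
have T_ge0 : 0 <= T by apply: sum_ge0 => j; apply: S_psd.
have X_ge0 : 0 <= X by apply: sum_ge0 => j; apply: Rabs_pos.
have [eps [K [eps01 [K0 [KT Ke]]]]] := perturbation_parameters q0_gt0 T_ge0 X_ge0 e0.
pose h j := vscale K (g j).
have hx j : pairing M (h j) x = 0 by rewrite pairing_vscalel gx Rmult_0_r.
exists (halfspaces M f0 (1 - eps) (sym_list f0 h (1 + eps))); split; [|split].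
- exists f0, (1 - eps), (sym_list f0 h (1 + eps)); split; first by move=> nu; split.
  left; apply: sym_list_admissible => // j; first exact: f0_orth (hx j).
  apply: Rle_trans KT; rewrite qform_vscale; apply: Rmult_le_compat_l; first nra.
  by apply: (le_sum_term (fun j => qform S (g j))) => i; apply: S_psd.
- split; first by rewrite f0x; lra.
  by apply/Forall_sym_list_lt => j; rewrite hx f0x Rabs_R0; lra.
- move=> y [y_gt /Forall_sym_list_lt y_lt] j; have := y_lt j.
  have -> : y j - x j = pairing M (g j) y + x j * (pairing M f0 y - 1).
    by rewrite pairing_vadd_scalel G_coord; ring.
  rewrite pairing_vscalel Rabs_mult (Rabs_pos_eq K) //; last lra.
  move: y_gt; set P := pairing M f0 y; set pg := pairing M (g j) y => P_gt P_lt.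
  have Kpg_ge0 : 0 <= K * Rabs pg by apply: Rmult_le_pos; [lra | apply: Rabs_pos].
  have pg_lt : Rabs pg < 2 * eps / K.
    apply: (Rmult_lt_reg_l K) => //; have -> : K * (2 * eps / K) = 2 * eps by field; lra.
    lra.
  have xP_le : Rabs (x j * (P - 1)) <= X * eps.
    rewrite Rabs_mult; apply: Rmult_le_compat; try exact: Rabs_pos.
      by apply: (le_sum_term (fun j => Rabs (x j))) => i; apply: Rabs_pos.
    by apply/Rlt_le/Rabs_def1; lra.
  by have := Rabs_triang pg (x j * (P - 1)); lra.
Qed.

Lemma U1_nbhs_of_repr (z : vec m) (x : vec n) e :
  (forall g, polar S g z = pairing M g x) -> ~ (forall j, x j = 0) -> 0 < e ->
  exists U, inU1 M S U /\ U x /\ forall y, U y -> box x e y.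
Proof.
move=> z_repr x_neq0 e0.
have qz_gt0 : 0 < qform S z.
  case: (S_psd z) => // qz0; case: x_neq0 => j.
  by rewrite -G_coord -z_repr polarC (psd_polar_eq0 S_psd (esym qz0)).
set s := pairing M z x.
have s_gt0 : 0 < s by rewrite /s -z_repr polar_diag; lra.
apply: (@U1_nbhs (vscale (/ s) z)) => //.
- rewrite qform_vscale; have s_inv := Rinv_0_lt_compat _ s_gt0.
  by apply: Rmult_lt_0_compat => //; apply: Rmult_lt_0_compat.
- by rewrite pairing_vscalel -/s; field; lra.
- by move=> g gx; rewrite polar_vscalel polarC z_repr gx Rmult_0_r.
Qed.

End BasicNeighbourhoods.

Theorem mainTheorem9 (m n : nat) (M : 'I_m -> 'I_n -> R) (S : 'I_m -> 'I_m -> R)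
  (hM : nondegenerate M) (hS : psd S) :
  is_basis (fun U : vec n -> Prop => inU0 M S U \/ inU1 M S U).
Proof.
split.
  move=> U [[oU _] | [f0 [a0 [l [UE _]]]]] //.
  apply: (@open_ext _ (halfspaces M f0 a0 l)) => [nu | ]; last exact: open_halfspaces.
  exact: iff_sym (UE nu).
move=> W oW x Wx.
have [G G_coord] := coord_functionals (proj2 hM).
have [e [e0 boxW]] := oW x Wx.
case: (classic (forall j, x j = 0)) => [x0 | x_neq0].
  have [U [U1 [Ux Ue]]] := U1_nbhs_origin S G G_coord x x0 e0.
  by exists U; split; [right | split => // y /Ue /boxW].
case: (polar_repr_or_radical S M x) => [[z z_repr] | [v [v_rad vx]]].
  have [U [U1 [Ux Ue]]] := U1_nbhs_of_repr hS G G_coord z_repr x_neq0 e0.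
  by exists U; split; [right | split => // y /Ue /boxW].
have [U [U0 [Ux UW]]] := U0_nbhs v_rad vx oW Wx.
by exists U; split; [left | split].
Qed.
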